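(* Let $(B,\mathfrak{m})$ be a deformation base, $X$ a vector space and $Y\subseteq B\widehat{\otimes}X$ a pseudoclosed $B$-submodule. Then $BY=B\cdot Y$ and $\mathfrak{m}^kY=\mathfrak{m}^k\cdot Y$ for every $k$.
   Context: Deformation base: complete local Noetherian unital $\mathbb{C}$-algebra $B$ with maximal ideal $\mathfrak{m}$, $B/\mathfrak{m}=\mathbb{C}$; $B\widehat{\otimes}X=\varprojlim(B/\mathfrak{m}^k\otimes X)$. For a subspace $Y\subseteq B\widehat{\otimes}X$: $BY=\{\sum_{i\ge0}b_iy_i:y_i\in Y,b_i\in\mathfrak{m}^{k_i},k_i\to\infty\}$ (convergent series), $\mathfrak{m}^kY$ is the same set with all $k_i\ge k$, while $B\cdot Y$ and $\mathfrak{m}^k\cdot Y$ denote the finite spans of products $by$ with $b\in B$ (resp. $b\in\mathfrak{m}^k$) and $y\in Y$. $Y$ is pseudoclosed if $BY\subseteq Y$. *)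

From HB Require Import structures.
From mathcomp Require Import all_boot all_order all_algebra.
From mathcomp Require Import boolp reals.
From mathcomp.real_closed Require Export complex.

Set Implicit Arguments.
Unset Strict Implicit.
Unset Printing Implicit Defensive.

Import Order.TTheory GRing.Theory Num.Theory.
Local Open Scope ring_scope.

Section DeformationDefs.
Variable K : fieldType.
Variable B : comAlgType K.

Definition is_ideal (I : B -> Prop) : Prop :=
  [/\ I 0, (forall a b, I a -> I b -> I (a + b)) & (forall r a, I a -> I (r * a))].

Definition fin_gen_ideal (I : B -> Prop) : Prop :=
  exists s : seq B, (forall g, g \in s -> I g) /\
    forall a, I a -> exists c : seq B, a = \sum_(i < size s) c`_i * s`_i.

Fixpoint ipow (m : B -> Prop) (k : nat) : B -> Prop :=
  match k with
  | 0 => fun _ => True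
  | k'.+1 => fun b => exists s : seq (B * B),
       (forall p, p \in s -> m p.1 /\ ipow m k' p.2) /\ b = \sum_(p <- s) p.1 * p.2
  end.

(* (B, m) is a deformation base: complete local Noetherian unital K-algebra
   with maximal ideal m and residue field B/m = K. *)
Definition deformation_base (m : B -> Prop) : Prop :=
  [/\ is_ideal m,
      ~ m 1,
      (forall b, ~ m b -> exists c, b * c = 1),
      (forall b, exists c : K, m (b - c%:A))          (* B/m = K *)
    & [/\ (forall I, is_ideal I -> fin_gen_ideal I),
      (forall b, (forall k, ipow m k b) -> b = 0)
    & (forall b : nat -> B, (forall k, ipow m k (b k.+1 - b k)) ->
         exists a, forall k, ipow m k (a - b k))]].

(* continuous linear functionals on B: linear maps B -> K vanishing on some m^k,
   i.e. the union of the duals (B/m^k)^* *)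
Definition lin_fun (phi : B -> K) : Prop :=
  forall (c : K) (a b : B), phi (c *: a + b) = c * phi a + phi b.
Definition cont_at (m : B -> Prop) (k : nat) (phi : B -> K) : Prop :=
  lin_fun phi /\ forall b, ipow m k b -> phi b = 0.
Definition cont (m : B -> Prop) (phi : B -> K) : Prop := exists k, cont_at m k phi.

Variable X : lmodType K.

(* Model of B \widehat{\otimes} X = lim_k (B/m^k (x) X) = lim_k Hom((B/m^k)^*, X)
   = Hom_K(B', X), B' the continuous dual.  An element is a function on
   functionals, K-linear on continuous functionals and normalized to 0 elsewhere. *)
Definition tens := (B -> K) -> X.

Definition ctens (m : B -> Prop) (F : tens) : Prop :=
  [/\ (forall phi, ~ cont m phi -> F phi = 0),
      (forall phi psi, cont m phi -> cont m psi ->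
          F (fun a => phi a + psi a) = F phi + F psi)
    & (forall (c : K) phi, cont m phi -> F (fun a => c * phi a) = c *: F phi)].

Definition tzero : tens := fun _ => 0.
Definition tadd (F G : tens) : tens := fun phi => F phi + G phi.
Definition tact (m : B -> Prop) (b : B) (F : tens) : tens :=
  fun phi => if pselect (cont m phi) then F (fun a => phi (b * a)) else 0.

(* congruence modulo m^k, i.e. equality of the images in B/m^k (x) X *)
Definition eqmod (m : B -> Prop) (k : nat) (F G : tens) : Prop :=
  forall phi, cont_at m k phi -> F phi = G phi.

Definition submodule (m : B -> Prop) (Y : tens -> Prop) : Prop :=
  [/\ (forall F, Y F -> ctens m F), Y tzero,
      (forall F G, Y F -> Y G -> Y (tadd F G))
    & (forall b F, Y F -> Y (tact m b F))].

(* finite span P . Y of products b y with P b, y in Y (B . Y for P = True,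
   m^k . Y for P = ipow m k) *)
Definition fspan (m : B -> Prop) (P : B -> Prop) (Y : tens -> Prop) (z : tens) : Prop :=
  exists (n : nat) (b : nat -> B) (y : nat -> tens),
    (forall i, (i < n)%N -> P (b i) /\ Y (y i)) /\
    z = (fun phi => \sum_(i < n) tact m (b i) (y i) phi).

(* m^k Y : convergent series sum_i b_i y_i, y_i in Y, b_i in m^(k_i),
   k_i >= k, k_i -> oo (BY is the case k = 0) *)
Definition sspan (m : B -> Prop) (k : nat) (Y : tens -> Prop) (z : tens) : Prop :=
  ctens m z /\
  exists (b : nat -> B) (y : nat -> tens) (e : nat -> nat),
    (forall i, [/\ Y (y i), (k <= e i)%N & ipow m (e i) (b i)]) /\
    (forall K, exists N, forall i, (N <= i)%N -> (K <= e i)%N) /\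
    (forall K, exists N0, forall N, (N0 <= N)%N ->
        eqmod m K z (fun phi => \sum_(i < N) tact m (b i) (y i) phi)).

Definition pseudoclosed (m : B -> Prop) (Y : tens -> Prop) : Prop :=
  forall z, sspan m 0 Y z -> Y z.

End DeformationDefs.

From HB Require Import structures.
From mathcomp Require Import all_boot all_order all_algebra.
From mathcomp Require Import boolp reals.
From mathcomp.real_closed Require Import complex.
From mathcomp Require Import zify.

(* A finite sum of terms b_i y_i with b_i in m^k is a series whose terms are
   eventually zero, and it lies in Y because Y is a submodule.  Conversely,
   m^k is finitely generated, say by g_1, ..., g_r, so every coefficient
   b_i in m^(e_i) of a convergent series can be written b_i = sum_l c_il g_l
   with c_il in m^(e_i - k).  The series w_l = sum_i c_il y_i converge, lie in
   Y by pseudoclosedness, and z = sum_l g_l w_l.  Convergence is harmless in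
   this model: evaluated at a functional vanishing on m^K, a convergent series
   is eventually constant, and its value is that eventual value. *)

Set Implicit Arguments.
Unset Strict Implicit.
Import Order.TTheory GRing.Theory Num.Theory.
Local Open Scope ring_scope.

Section IdealPowers.
Variables (K : fieldType) (B : comAlgType K) (m : B -> Prop).
Hypothesis m_ideal : is_ideal m.

Lemma ipow0 j : ipow m j 0.
Proof. by case: j => [//|j]; exists [::]; rewrite big_nil. Qed.

Lemma ipowD j a b : ipow m j a -> ipow m j b -> ipow m j (a + b).
Proof.
case: j => [//|j] [s [Hs ->]] [t [Ht ->]].
exists (s ++ t); split; last by rewrite big_cat.
by move=> p; rewrite mem_cat => /orP[/Hs | /Ht].
Qed.

Lemma ipowS_mul j a c : m a -> ipow m j c -> ipow m j.+1 (a * c).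
Proof.
move=> ha hc; exists [:: (a, c)]; split; last by rewrite big_seq1.
by move=> p; rewrite inE => /eqP ->.
Qed.

Lemma ipowMl j r a : ipow m j a -> ipow m j (r * a).
Proof.
case: j => [//|j] [s [Hs ->]]; case: m_ideal => _ _ m_mul.
exists [seq (r * p.1, p.2) | p <- s]; split.
- by move=> q /mapP[p /Hs[h1 h2] ->]; split=> //; apply: m_mul.
- by rewrite big_map mulr_sumr; apply: eq_bigr => p _; rewrite mulrA.
Qed.

Lemma ipowMr j r a : ipow m j a -> ipow m j (a * r).
Proof. by rewrite mulrC; apply: ipowMl. Qed.

Lemma ipow_le j j' b : (j <= j')%N -> ipow m j' b -> ipow m j b.
Proof.
have ipowS i a : ipow m i.+1 a -> ipow m i a.
  elim: i a => [//|i IH] a [s [Hs ->]].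
  by exists s; split=> // p /Hs[h1 /IH h2].
move=> /subnK <-; elim: (j' - j)%N b => [|d IH] b; first by rewrite add0n.
by rewrite addSn => /ipowS; apply: IH.
Qed.

Lemma ipow_ideal k : is_ideal (ipow m k).
Proof. by split; [apply: ipow0 | apply: ipowD | apply: ipowMl]. Qed.

Lemma ipow_gen_coef k r (g : nat -> B) :
  (forall a, ipow m k a -> exists c : nat -> B, a = \sum_(l < r) c l * g l) ->
  forall j a, ipow m (j + k) a ->
    exists c : nat -> B, (forall l, ipow m j (c l)) /\ a = \sum_(l < r) c l * g l.
Proof.
move=> gen; elim=> [|j IH] a; first by rewrite add0n => /gen[c ->]; exists c.
rewrite addSn => -[s [Hs ->]]; elim: s Hs => [|p s IHs] Hs.
  exists (fun _ => 0); split=> [l|]; first exact: ipow0.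
  by rewrite big_nil big1 // => l _; rewrite mul0r.
have [hp1 /IH[d [Hd Ep]]] := Hs p (mem_head _ _).
have [c [Hc Es]] : exists c : nat -> B,
    (forall l, ipow m j.+1 (c l)) /\ \sum_(q <- s) q.1 * q.2 = \sum_(l < r) c l * g l.
  by apply: IHs => q qs; apply: Hs; rewrite in_cons qs orbT.
exists (fun l => p.1 * d l + c l); split=> [l|]; first exact/ipowD/Hc/ipowS_mul.
rewrite big_cons Es Ep mulr_sumr -big_split /=; apply: eq_bigr => l _.
by rewrite mulrDl mulrA.
Qed.

End IdealPowers.

Definition eventual (V : zmodType) (f : nat -> V) : V :=
  if pselect (exists v, exists N0, forall N, (N0 <= N)%N -> f N = v) is left H
  then sval (cid H) else 0.

Lemma eventualE (V : zmodType) (f : nat -> V) N0 :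
  (forall N, (N0 <= N)%N -> f N = f N0) -> eventual f = f N0.
Proof.
move=> H; rewrite /eventual; case: pselect => [h|hn]; last first.
  by exfalso; apply: hn; exists (f N0), N0.
case: (cid h) => v [N1 HN1] /=.
by rewrite -(HN1 (maxn N0 N1) (leq_maxr _ _)) H // leq_maxl.
Qed.

Lemma sum_ord_vanishing_tail (V : zmodType) (f : nat -> V) N N' :
  (forall i, (N <= i)%N -> f i = 0) -> (N <= N')%N ->
  \sum_(i < N') f i = \sum_(i < N) f i.
Proof.
move=> f0 le; rewrite (big_ord_widen N' f le) [RHS]big_mkcond /=.
by apply: eq_bigr => i _; case: ltnP => // /f0.
Qed.

Section Functionals.
Variables (K : fieldType) (B : comAlgType K) (m : B -> Prop).
Hypothesis m_ideal : is_ideal m.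
Implicit Types (phi psi : B -> K).

Lemma lin_funD phi a b : lin_fun phi -> phi (a + b) = phi a + phi b.
Proof. by move=> hl; have := hl 1 a b; rewrite scale1r mul1r. Qed.

Lemma cont_at_le k k' phi : (k <= k')%N -> cont_at m k phi -> cont_at m k' phi.
Proof. by move=> le [hl hv]; split=> // b /(ipow_le le); apply: hv. Qed.

Lemma cont_at_shift k c phi : cont_at m k phi -> cont_at m k (fun a => phi (c * a)).
Proof.
move=> [hl hv]; split=> [d a b|b hb]; first by rewrite mulrDr -scalerAr hl.
by apply: hv; apply: ipowMl.
Qed.

Lemma cont_shift c phi : cont m phi -> cont m (fun a => phi (c * a)).
Proof. by move=> [k h]; exists k; apply: cont_at_shift. Qed.

Lemma cont_at_add k phi psi : cont_at m k phi -> cont_at m k psi ->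
  cont_at m k (fun a => phi a + psi a).
Proof.
move=> [hl hv] [hl' hv']; split=> [d a b|b hb]; first by rewrite hl hl' mulrDr addrACA.
by rewrite hv // hv' // addr0.
Qed.

Lemma cont_add phi psi : cont m phi -> cont m psi -> cont m (fun a => phi a + psi a).
Proof.
move=> [k1 h1] [k2 h2]; exists (maxn k1 k2).
by apply: cont_at_add; apply: cont_at_le; [apply: leq_maxl | | apply: leq_maxr |].
Qed.

Lemma cont_at_scale k d phi : cont_at m k phi -> cont_at m k (fun a => d * phi a).
Proof.
move=> [hl hv]; split=> [e a b|b hb]; first by rewrite hl mulrDr mulrCA.
by rewrite hv // mulr0.
Qed.

Lemma cont_zero : cont m (fun _ : B => 0 : K).
Proof. by exists 0%N; split=> // c a b; rewrite mulr0 addr0. Qed.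

End Functionals.

Section Tensors.
Variables (K : fieldType) (B : comAlgType K) (m : B -> Prop) (X : lmodType K).
Hypothesis m_ideal : is_ideal m.
Implicit Types (F G : tens B X) (phi psi : B -> K).

Definition tsum (b : nat -> B) (y : nat -> tens B X) (N : nat) : tens B X :=
  fun phi => \sum_(i < N) tact m (b i) (y i) phi.

Lemma tactE c F phi : cont m phi -> tact m c F phi = F (fun a => phi (c * a)).
Proof. by move=> h; rewrite /tact; case: pselect. Qed.

Lemma tact_ncont c F phi : ~ cont m phi -> tact m c F phi = 0.
Proof. by move=> h; rewrite /tact; case: pselect. Qed.

Lemma tactA b c F : tact m b (tact m c F) = tact m (b * c) F.
Proof.
apply: funext => phi; case: (pselect (cont m phi)) => hphi; last by rewrite !tact_ncont.
by rewrite !tactE //; [congr F; apply: funext => a; rewrite mulrA | apply: cont_shift].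
Qed.

Lemma ctens_eval0 F : ctens m F -> F (fun _ => 0) = 0.
Proof.
case=> _ _ Fscale; rewrite -(scale0r (F (fun _ => 0))) -Fscale ?mul0r //.
exact: cont_zero.
Qed.

Lemma tact_vanish k c F phi : ctens m F -> cont_at m k phi -> ipow m k c ->
  tact m c F phi = 0.
Proof.
move=> HF hphi hc; rewrite tactE; last by exists k.
have -> : (fun a => phi (c * a)) = (fun _ => 0).
  by apply: funext => a; case: hphi => _; apply; apply: ipowMr.
exact: ctens_eval0.
Qed.

Lemma tactDl F phi : ctens m F -> cont m phi ->
  {morph (fun a => tact m a F phi) : a b / a + b}.
Proof.
move=> [_ Fadd _] hphi a b /=; have [k [hl _]] := hphi.
rewrite !tactE // -Fadd; try exact: cont_shift.
by congr F; apply: funext => x; rewrite mulrDl lin_funD.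
Qed.

Lemma ctens_tzero : ctens m (@tzero K B X).
Proof. by split=> // [phi psi _ _|c phi _]; rewrite /tzero ?addr0 ?scaler0. Qed.

Lemma ctens_tadd F G : ctens m F -> ctens m G -> ctens m (tadd F G).
Proof.
move=> [F0 FD FZ] [G0 GD GZ]; rewrite /tadd; split=> [phi h|phi psi h1 h2|c phi h].
- by rewrite F0 // G0 // addr0.
- by rewrite FD // GD // addrACA.
- by rewrite FZ // GZ // scalerDr.
Qed.

Lemma ctens_tact c F : ctens m F -> ctens m (tact m c F).
Proof.
move=> [_ Fadd Fscale]; split=> [phi|phi psi h1 h2|d phi h]; first exact: tact_ncont.
- rewrite !tactE //; last exact: cont_add.
  exact: (Fadd (fun a => phi (c * a)) (fun a => psi (c * a))
                (cont_shift m_ideal c h1) (cont_shift m_ideal c h2)).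
- have [k hk] := h; rewrite !tactE //; last by exists k; apply: cont_at_scale.
  exact: (Fscale d (fun a => phi (c * a)) (cont_shift m_ideal c h)).
Qed.

Lemma tsum_closed (P : tens B X -> Prop) b y N :
  P (@tzero K B X) -> (forall F G, P F -> P G -> P (tadd F G)) ->
  (forall i, (i < N)%N -> P (tact m (b i) (y i))) -> P (tsum b y N).
Proof.
move=> P0 PD Py; elim: N Py => [|N IH] Py.
  by have -> : tsum b y 0 = tzero X by apply: funext => phi; rewrite /tsum big_ord0.
have -> : tsum b y N.+1 = tadd (tsum b y N) (tact m (b N) (y N)).
  by apply: funext => phi; rewrite /tsum big_ord_recr.
by apply: PD; [apply: IH => i /ltnW; apply: Py | apply: Py].
Qed.

Lemma ctens_tsum b y N : (forall i, ctens m (y i)) -> ctens m (tsum b y N).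
Proof.
move=> Hy; apply: tsum_closed => [||i _]; [exact: ctens_tzero | exact: ctens_tadd |].
exact: ctens_tact.
Qed.

Section Series.
Variables (c : nat -> B) (y : nat -> tens B X) (e : nat -> nat).
Hypothesis y_ctens : forall i, ctens m (y i).
Hypothesis c_ipow : forall i, ipow m (e i) (c i).
Hypothesis e_unbounded : forall k, exists N, forall i, (N <= i)%N -> (k <= e i)%N.

Definition series : tens B X := fun phi => eventual (fun N => tsum c y N phi).

Lemma series_tsum k phi N : cont_at m k phi -> (forall i, (N <= i)%N -> (k <= e i)%N) ->
  forall N', (N <= N')%N -> series phi = tsum c y N' phi.
Proof.
move=> hphi hN N' hN'.
have van i : (N <= i)%N -> tact m (c i) (y i) phi = 0.
  by move=> /hN le; apply: (tact_vanish (y_ctens i) hphi); apply: (ipow_le le).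
rewrite /series (@eventualE _ _ N) => [|N'' hN'']; rewrite /tsum.
  by rewrite (sum_ord_vanishing_tail van hN').
by rewrite (sum_ord_vanishing_tail van hN'').
Qed.

Lemma series_ctens : ctens m series.
Proof.
have tsum_ctens N := ctens_tsum c N y_ctens.
split=> [phi hn|phi psi [k1 h1] [k2 h2]|d phi [k hk]].
- rewrite /series (@eventualE _ _ 0%N) => [|N _]; rewrite /tsum ?big_ord0 //.
  by rewrite big1 ?big_ord0 // => i _; apply: tact_ncont.
- have h1' := cont_at_le (leq_maxl k1 k2) h1.
  have h2' := cont_at_le (leq_maxr k1 k2) h2.
  have [N hN] := e_unbounded (maxn k1 k2).
  rewrite !(series_tsum _ hN (leqnn N)) //; last exact: cont_at_add.
  by case: (tsum_ctens N) => _ tsumD _; rewrite tsumD //; [exists k1 | exists k2].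
- have [N hN] := e_unbounded k.
  rewrite !(series_tsum _ hN (leqnn N)) //; last exact: cont_at_scale.
  by case: (tsum_ctens N) => _ _ tsumZ; rewrite tsumZ //; exists k.
Qed.

Lemma sspan_series (Y : tens B X -> Prop) : (forall i, Y (y i)) -> sspan m 0 Y series.
Proof.
move=> HY; split; first exact: series_ctens.
exists c, y, e; split; [by move=> i; split | split=> // k].
have [N hN] := e_unbounded k; exists N => N' hN' phi hphi.
exact: series_tsum hphi hN N' hN'.
Qed.

End Series.

Lemma tsum_regroup (c : nat -> nat -> B) (g : nat -> B) (y : nat -> tens B X)
    r N phi :
  (forall i, ctens m (y i)) -> cont m phi ->
  \sum_(i < N) tact m (\sum_(l < r) c i l * g l) (y i) phi =
  \sum_(l < r) tsum (c^~ l) y N (fun a => phi (g l * a)).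
Proof.
move=> Hy hphi; rewrite /tsum exchange_big /=; apply: eq_bigr => i _.
have [k hk] := hphi.
rewrite (big_morph _ (tactDl (Hy i) hphi) (tact_vanish (Hy i) hk (ipow0 m k))).
by apply: eq_bigr => l _; rewrite mulrC -tactA tactE.
Qed.

End Tensors.

Section FiniteAndConvergentSpans.
Variables (K : fieldType) (B : comAlgType K) (m : B -> Prop) (X : lmodType K).
Variable Y : tens B X -> Prop.
Hypothesis m_ideal : is_ideal m.
Hypothesis Y_submodule : submodule m Y.

Lemma fspan_sspan k z : fspan m (ipow m k) Y z -> sspan m k Y z.
Proof.
move=> [n [b [y [Hi ->]]]]; have [Y_ctens Y0 YD Yact] := Y_submodule.
split.
  by apply: Y_ctens; apply: (tsum_closed (P := Y)) => // i /Hi[_]; apply: Yact.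
pose b' i := if (i < n)%N then b i else 0.
pose y' i := if (i < n)%N then y i else tzero X.
exists b', y', (fun i => if (i < n)%N then k else k + i)%N; split; [|split].
- move=> i; rewrite /b' /y'; case: ifP => [/Hi[]|_] //.
  by split=> //; [exact: leq_addr | exact: ipow0].
- by move=> k'; exists (n + k')%N => i hi; case: ltnP => //; lia.
- move=> k'; exists n => N hN phi _.
  rewrite /= (sum_ord_vanishing_tail (f := fun i => tact m (b' i) (y' i) phi) _ hN) => [|i].
    by apply: eq_bigr => i _; rewrite /b' /y' ltn_ord.
  by rewrite /b' /y' leqNgt => /negbTE ->; rewrite /tact; case: pselect.
Qed.

Hypothesis m_noetherian : forall I : B -> Prop, is_ideal I -> fin_gen_ideal I.
Hypothesis Y_pseudoclosed : pseudoclosed m Y.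

Lemma ipow_generators k : exists (r : nat) (g : nat -> B),
  (forall l, (l < r)%N -> ipow m k (g l)) /\
  forall j a, ipow m (j + k) a ->
    exists c : nat -> B, (forall l, ipow m j (c l)) /\ a = \sum_(l < r) c l * g l.
Proof.
have [s [Hs gen]] := m_noetherian (ipow_ideal m_ideal k).
exists (size s), (nth 0 s); split=> [l ls|]; first by apply: Hs; apply: mem_nth.
by apply: ipow_gen_coef => // a /gen[c ->]; exists (nth 0 c).
Qed.

Lemma sspan_fspan k z : sspan m k Y z -> fspan m (ipow m k) Y z.
Proof.
move=> [z_ctens [b [y [e [Hi [He Hconv]]]]]].
have [r [g [Hg gen]]] := ipow_generators k.
have coef i : exists ci : nat -> B,
    (forall l, ipow m (e i - k) (ci l)) /\ b i = \sum_(l < r) ci l * g l.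
  by have [_ ke hb] := Hi i; apply: gen; rewrite subnK.
have [c Hc] := choice coef.
have y_ctens i : ctens m (y i) by case: Y_submodule => + _ _ _; apply; case: (Hi i).
have He' k' : exists N, forall i, (N <= i)%N -> (k' <= e i - k)%N.
  by have [N hN] := He (k' + k)%N; exists N => i /hN; lia.
exists r, g, (fun l => series m (c^~ l) y); split=> [l lr|].
  split; first exact: Hg.
  apply/Y_pseudoclosed/(sspan_series m_ideal y_ctens (fun i => (Hc i).1 l) He') => i.
  by case: (Hi i).
apply: funext => phi /=; case: (pselect (cont m phi)) => [[k' hk]|hn]; last first.
  by case: z_ctens => -> // _ _; rewrite big1 // => l _; apply: tact_ncont.
have [N1 hN1] := He' k'; have [N0 hN0] := Hconv k'.
rewrite (hN0 (maxn N0 N1) (leq_maxl _ _) phi hk) /=.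
under eq_bigr => i _ do rewrite (Hc i).2.
rewrite tsum_regroup //; last by exists k'.
apply: eq_bigr => l _; rewrite tactE; last by exists k'.
symmetry; exact: (series_tsum m_ideal (c := c^~ l) (e := fun i => (e i - k)%N) y_ctens
  (fun i => (Hc i).1 l) (cont_at_shift m_ideal (g l) hk) hN1 (leq_maxr N0 N1)).
Qed.

End FiniteAndConvergentSpans.

(* C is modelled as R[i] for R : realType (a copy of the real numbers). *)
Theorem lemma2p23 (R : realType) (B : comAlgType R[i]) (m : B -> Prop)
    (X : lmodType R[i]) (Y : tens B X -> Prop) :
  deformation_base m -> submodule m Y -> pseudoclosed m Y ->
  (forall z, sspan m 0 Y z <-> fspan m (fun _ => True) Y z) /\
  (forall (k : nat) z, sspan m k Y z <-> fspan m (ipow m k) Y z).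
Proof.
move=> [m_ideal _ _ _ [m_noetherian _ _]] Y_submodule Y_pseudoclosed.
have spans_eq k z : sspan m k Y z <-> fspan m (ipow m k) Y z.
  by split; [apply: sspan_fspan | apply: fspan_sspan].
by split=> [z|]; [apply: (spans_eq 0%N) | apply: spans_eq].
Qed.
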